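(* In the M/G/1 setting below: (i) For a fixed fee $p\in[0,R-C/\mu)$: (a) if $\lambda\le\mathbb{E}[\Lambda]$, then $\mathrm{Rev}^S(p)\le\mathrm{Rev}^C(p)$; (b) if $\mathbb{E}[\Lambda]<\lambda\le\bar\lambda$ and $\xi(p)\ge\lambda$, then $\mathrm{Rev}^S(p)\le\mathrm{Rev}^C(p)$; (c) if $\lambda>\bar\lambda$ and $\xi(p)\ge\bar\lambda$, then $\mathrm{Rev}^S(p)\ge\mathrm{Rev}^C(p)$. (ii) As functions of the joining probability $q$: if $\lambda>\mathbb{E}[\Lambda]$, there exists $q_0>0$ such that $\mathrm{Rev}^S(q)>\mathrm{Rev}^C(q)$ for all $q\in(0,q_0)$; if $\lambda<\mathbb{E}[\Lambda]$, there exists $q_0>0$ such that $\mathrm{Rev}^S(q)<\mathrm{Rev}^C(q)$ for all $q\in(0,q_0)$.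
   Context: Setting: an M/G/1 queue with true (deterministic) Poisson arrival rate $\lambda>0$ and i.i.d. service times $S$ with $\mathbb{E}[S]=1/\mu$, $\mathbb{E}[S^2]=s^2$; for $0\le x<\mu$, $W(x)=\frac{s^2x}{2(1-x/\mu)}+\frac1\mu$ is the expected time in system at effective arrival rate $x$. Each served customer receives reward $R$, pays fee $p$, and incurs waiting cost $C>0$ per unit time, with $R\ge C/\mu$. Customers' beliefs about the arrival rate are described by a non-degenerate nonnegative random variable $\Lambda$ whose support has minimum $\lambda_{\min}$ and maximum $\lambda_{\max}$, with $0\le\lambda_{\min}<\lambda<\lambda_{\max}<\mu$. For $0\le p<R-C/\mu$, $\xi(p)\in(0,\mu)$ is the unique solution of $W(\xi)=(R-p)/C$, i.e. $\xi(p)=\left(\frac{Cs^2}{2(R-p-C/\mu)}+\frac1\mu\right)^{-1}$. Classical case: $q^C(p)=\min\{\xi(p)/\lambda,1\}$ and $\mathrm{Rev}^C(p)=p\lambda q^C(p)$. Shared belief case: $q^S(p)=1$ if $C\,\mathbb{E}[W(\Lambda)]\le R-p$, otherwise $q^S(p)$ is the unique $q\in[0,1)$ with $C\,\mathbb{E}[W(q\Lambda)]=R-p$; $\mathrm{Rev}^S(p)=p\lambda q^S(p)$. The threshold $\bar\lambda\in[0,\mu)$ is defined by $W(\bar\lambda)=\mathbb{E}[W(\Lambda)]$ (so $q^S(p)=1$ iff $\xi(p)\ge\bar\lambda$). As functions of $q\in[0,1]$: $\mathrm{Rev}^C(q)=q\lambda(R-C\,W(q\lambda))$ and $\mathrm{Rev}^S(q)=q\lambda\,\mathbb{E}[R-C\,W(q\Lambda)]$.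 *)

(* R : realType, the belief Lambda is given through
   its law P, a probability measure on the Borel sets of R. *)
From HB Require Import structures.
From mathcomp Require Import all_boot all_order all_algebra.
From mathcomp Require Import all_classical all_reals all_analysis.
Set Implicit Arguments. Unset Strict Implicit. Unset Printing Implicit Defensive.
Import Order.TTheory GRing.Theory Num.Theory.
Local Open Scope classical_set_scope.
Local Open Scope ring_scope.

Section MG1.
Variable R : realType.

(* expected time in system at effective arrival rate x (for 0 <= x < mu) *)
Definition W (s2 mu x : R) : R := s2 * x / (2 * (1 - x / mu)) + 1 / mu.

(* xi(p): solution of W(xi) = (R - p)/C *)
Definition xi (Rw C s2 mu p : R) : R :=
  (C * s2 / (2 * (Rw - p - C / mu)) + 1 / mu)^-1.

Definition support_min_max (P : probability R R) (a b : R) : Prop :=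
  P `[a, b]%classic = 1%E /\
  (forall e : R, 0 < e -> (0 < P `](a - e)%R, (a + e)%R[%classic)%E) /\
  (forall e : R, 0 < e -> (0 < P `](b - e)%R, (b + e)%R[%classic)%E).

Definition ELam (P : probability R R) : R := Rintegral P setT (fun x => x).

Definition EW (P : probability R R) (s2 mu q : R) : R :=
  Rintegral P setT (fun x => W s2 mu (q * x)).

Definition qC (Rw C s2 mu lam p : R) : R := Num.min (xi Rw C s2 mu p / lam) 1.
Definition RevC (Rw C s2 mu lam p : R) : R := p * lam * qC Rw C s2 mu lam p.

Definition qS (P : probability R R) (Rw C s2 mu p : R) : R :=
  if C * EW P s2 mu 1 <= Rw - p then 1
  else xget 0 [set q : R | 0 <= q < 1 /\ C * EW P s2 mu q = Rw - p].
Definition RevS (P : probability R R) (Rw C s2 mu lam p : R) : R :=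
  p * lam * qS P Rw C s2 mu p.

Definition lambda_bar (P : probability R R) (s2 mu : R) : R :=
  xget 0 [set x : R | 0 <= x < mu /\ W s2 mu x = EW P s2 mu 1].

Definition RevC_q (Rw C s2 mu lam q : R) : R :=
  q * lam * (Rw - C * W s2 mu (q * lam)).
Definition RevS_q (P : probability R R) (Rw C s2 mu lam q : R) : R :=
  q * lam * Rintegral P setT (fun x => Rw - C * W s2 mu (q * x)).

End MG1.

(* On [0, mu) the sojourn time is increasing and convex, with
   W y = 1/mu + s2 y / 2 + s2 y^2 / (2 (mu - y)).
   For a fixed fee, a tangent line of W at q lam (Jensen) gives
   W (q lam) <= E[W (q Lambda)] whenever lam <= E[Lambda]; since q^S solves
   C E[W (q Lambda)] = R - p = C W (xi p), monotonicity yields q^S lam <= xi p,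
   i.e. q^S <= q^C.  If lambda_bar <= xi p then C E[W Lambda] <= R - p, so
   q^S = 1 >= q^C.  As functions of q,
   Rev^S - Rev^C = q lam C (W (q lam) - E[W (q Lambda)])
                 = q lam C (s2 q (lam - E[Lambda]) / 2 + O(q^2)),
   by the expansion of W, which has the sign of lam - E[Lambda] for small q. *)

From HB Require Import structures.
From mathcomp Require Import all_boot all_order all_algebra.
From mathcomp Require Import all_classical all_reals all_analysis.
From mathcomp Require Import measurable_realfun ring lra.
Import Order.TTheory GRing.Theory Num.Theory.
Local Open Scope classical_set_scope.
Local Open Scope ring_scope.

Lemma measurable_inv (R : realType) : measurable_fun setT (@GRing.inv R).
Proof.
rewrite -(setUv [set 0]); apply/measurable_funU => //; first exact: measurableC.
split; first exact: measurable_fun_set1.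
apply: open_continuous_measurable_fun.
  by rewrite openC; apply: compact_closed; [exact: Rhausdorff | exact: compact_set1].
by move=> x /set_mem x_neq0; apply: inv_continuous; apply/eqP.
Qed.

Lemma measurable_W_scaled {R : realType} (s2 mu q : R) :
  measurable_fun setT (fun x => W s2 mu (q * x)).
Proof.
have mqx : measurable_fun setT (fun x : R => q * x) by exact: measurable_funM.
rewrite /W; apply: measurable_funD => //; apply: measurable_funM.
  exact: measurable_funM.
apply: measurableT_comp; first exact: measurable_inv.
apply: measurable_funM => //; apply: measurable_funB => //.
exact: measurable_funM.
Qed.

Definition W_slope {R : realType} (s2 mu y : R) := s2 * mu ^+ 2 / (2 * (mu - y) ^+ 2).

Definition W_inverse {R : realType} (s2 mu d : R) := 2 * d * mu / (s2 * mu + 2 * d).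

Section SojournTime.
Context {R : realType} {s2 mu : R}.

Lemma W_expand (y : R) : 0 < mu -> y < mu ->
  W s2 mu y = 1 / mu + s2 / 2 * y + s2 / 2 * (y ^+ 2 / (mu - y)).
Proof.
move=> mu_gt0 y_lt_mu; have mu_y_gt0 : 0 < mu - y by lra.
rewrite /W (_ : 1 - y / mu = (mu - y) / mu); last by field; rewrite gt_eqF.
by field; rewrite !gt_eqF.
Qed.

Lemma W_ge_linear (y : R) : 0 < mu -> 0 <= s2 -> 0 <= y < mu ->
  1 / mu + s2 / 2 * y <= W s2 mu y.
Proof.
move=> mu_gt0 s2_ge0 /andP[y_ge0 y_lt_mu]; rewrite W_expand // lerDl.
by apply: mulr_ge0; apply: divr_ge0; rewrite ?sqr_ge0 //; lra.
Qed.

Lemma W_le_quadratic (y B : R) : 0 < mu -> 0 <= s2 -> 0 <= y <= B -> B < mu ->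
  W s2 mu y <= 1 / mu + s2 / 2 * y + s2 / 2 * (y ^+ 2 / (mu - B)).
Proof.
move=> mu_gt0 s2_ge0 /andP[y_ge0 y_le_B] B_lt_mu; rewrite W_expand; [|lra|lra].
rewrite lerD2l; apply: ler_wpM2l; first by apply: divr_ge0; lra.
by apply: ler_wpM2l; [exact: sqr_ge0 | rewrite lef_pV2 ?posrE; lra].
Qed.

Lemma W_slope_ge0 (y : R) : 0 <= s2 -> 0 <= W_slope s2 mu y.
Proof.
by move=> s2_ge0; apply: divr_ge0; apply: mulr_ge0; rewrite ?sqr_ge0 //; lra.
Qed.

(* [W_slope s2 mu a] is W'(a); this is the convexity of W on ]-oo, mu[. *)
Lemma W_tangent_le (a y : R) : 0 < mu -> 0 <= s2 -> a < mu -> y < mu ->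
  W s2 mu a + W_slope s2 mu a * (y - a) <= W s2 mu y.
Proof.
move=> mu_gt0 s2_ge0 a_lt_mu y_lt_mu; have ha : 0 < mu - a by lra.
have hy : 0 < mu - y by lra.
rewrite !W_expand // /W_slope -subr_ge0.
have -> : 1 / mu + s2 / 2 * y + s2 / 2 * (y ^+ 2 / (mu - y)) -
    (1 / mu + s2 / 2 * a + s2 / 2 * (a ^+ 2 / (mu - a)) +
     s2 * mu ^+ 2 / (2 * (mu - a) ^+ 2) * (y - a))
  = s2 * mu ^+ 2 * (y - a) ^+ 2 / (2 * (mu - y) * (mu - a) ^+ 2).
  by field; rewrite !gt_eqF.
by apply: divr_ge0; apply: mulr_ge0; rewrite ?sqr_ge0 //;
  apply: mulr_ge0; rewrite ?sqr_ge0 //; lra.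
Qed.

Lemma W_lt_W : 0 < mu -> 0 < s2 -> {in `]-oo, mu[ &, {homo W s2 mu : x y / x < y}}.
Proof.
move=> mu_gt0 s2_gt0 x y; rewrite !in_itv /= => x_lt_mu y_lt_mu x_lt_y.
have hx : 0 < mu - x by lra.
have hy : 0 < mu - y by lra.
rewrite !W_expand // -subr_gt0.
have -> : 1 / mu + s2 / 2 * y + s2 / 2 * (y ^+ 2 / (mu - y)) -
    (1 / mu + s2 / 2 * x + s2 / 2 * (x ^+ 2 / (mu - x)))
  = s2 * mu ^+ 2 * (y - x) / (2 * (mu - x) * (mu - y)).
  by field; rewrite !gt_eqF.
by apply: divr_gt0; rewrite !mulr_gt0 ?exprn_gt0 //; lra.
Qed.

Lemma ler_W : 0 < mu -> 0 < s2 -> {in `]-oo, mu[ &, {mono W s2 mu : x y / x <= y}}.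
Proof. by move=> mu_gt0 s2_gt0; apply/le_mono_in/W_lt_W. Qed.

Lemma W_inverse_spec (d : R) : 0 < mu -> 0 < s2 -> 0 <= d ->
  0 <= W_inverse s2 mu d < mu /\ W s2 mu (W_inverse s2 mu d) = 1 / mu + d.
Proof.
move=> mu_gt0 s2_gt0 d_ge0; have s2mu_gt0 := mulr_gt0 s2_gt0 mu_gt0.
have s2mu2_gt0 := mulr_gt0 s2mu_gt0 mu_gt0.
have den_gt0 : 0 < s2 * mu + 2 * d by lra.
have lt_mu : W_inverse s2 mu d < mu by rewrite /W_inverse ltr_pdivrMr //; lra.
split; first by rewrite lt_mu andbT; apply: divr_ge0; rewrite ?mulr_ge0 //; lra.
by rewrite W_expand // /W_inverse; field; rewrite !gt_eqF //; lra.
Qed.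

Lemma xi_spec (Rw C p : R) : 0 < mu -> 0 < s2 -> 0 < C -> C / mu < Rw - p ->
  0 <= xi Rw C s2 mu p < mu /\ C * W s2 mu (xi Rw C s2 mu p) = Rw - p.
Proof.
move=> mu_gt0 s2_gt0 C_gt0 p_lt; set d := (Rw - p) / C - 1 / mu.
have d_gt0 : 0 < d by rewrite /d subr_gt0 ltr_pdivlMr // mul1r mulrC.
have -> : xi Rw C s2 mu p = W_inverse s2 mu d.
  have Cmu : C < (Rw - p) * mu by rewrite -ltr_pdivrMr.
  have := mulr_gt0 (mulr_gt0 s2_gt0 mu_gt0) (mulr_gt0 C_gt0 mu_gt0).
  by rewrite /xi /W_inverse /d => ?; field; rewrite !gt_eqF //; lra.
have [-> ->] := W_inverse_spec d mu_gt0 s2_gt0 (ltW d_gt0).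
by split => //; rewrite /d; field; rewrite !gt_eqF.
Qed.

End SojournTime.

Section SupportedIntegrals.
Context {R : realType} {P : probability R R} {a b : R}.
Hypothesis P_ab : P `[a, b]%classic = 1%E.

Lemma Rintegral_itv (f : R -> R) : measurable_fun setT f ->
  Rintegral P setT f = Rintegral P `[a, b]%classic f.
Proof.
move=> mf; have mab : measurable `[a, b]%classic by exact: measurable_itv.
have P_nab : P (~` `[a, b]%classic) = 0%E.
  by rewrite (@probability_setC _ _ _ P _ mab) P_ab subee.
rewrite /Rintegral -(setUv `[a, b]%classic) integral_setU //.
- by rewrite [X in (_ + X)%E]null_set_integral ?adde0 //;
    [exact: measurableC | apply/measurable_EFinP; exact: measurable_funS mf].
- exact: measurableC.
- by rewrite setUv; apply/measurable_EFinP.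
- by rewrite /disj_set setICr.
Qed.

Section Bounded.
Context {f : R -> R} {lo hi : R}.
Hypotheses (mf : measurable_fun setT f)
  (f_bnd : forall x, `[a, b]%classic x -> lo <= f x <= hi).

Lemma integrable_itv : P.-integrable `[a, b]%classic (EFin \o f).
Proof.
apply: measurable_bounded_integrable.
- exact: measurable_itv.
- by apply: (le_lt_trans (probability_le1 _ _)) => //; rewrite ltey.
- exact: measurable_funS mf.
exists (`|lo| + `|hi|); split; first by rewrite num_real.
move=> M M_gt x /f_bnd /andP[lo_f f_hi]; apply: le_trans (ltW M_gt).
rewrite ler_norml; apply/andP; split.
  by have := ler_norm (- lo); have := normr_ge0 hi; rewrite normrN; lra.
by have := ler_norm hi; have := normr_ge0 lo; lra.
Qed.

Lemma integrable_affine (c0 c1 : R) :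
  P.-integrable `[a, b]%classic (EFin \o fun x => c0 + c1 * f x).
Proof.
exact: (integrableD (measurable_itv _)
  (finite_measure_integrable_cst P c0 (measurable_itv _))
  (integrableZl (measurable_itv _) c1 integrable_itv)).
Qed.

Lemma Rintegral_affine (c0 c1 : R) :
  Rintegral P setT (fun x => c0 + c1 * f x) = c0 + c1 * Rintegral P setT f.
Proof.
have mab : measurable `[a, b]%classic by exact: measurable_itv.
have f_int := integrable_itv.
rewrite Rintegral_itv; last by apply: measurable_funD => //; exact: measurable_funM.
rewrite RintegralD //; last exact: (integrableZl mab c1 f_int).
  rewrite Rintegral_cst //; have -> : fine (P `[a, b]%classic) = 1.
    exact: (congr1 fine P_ab).
  by rewrite mulr1 RintegralZl // -Rintegral_itv.
exact: finite_measure_integrable_cst.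
Qed.

End Bounded.

Let measurable_x : measurable_fun setT (fun x : R => x).
Proof. exact: measurable_id. Qed.

Let x_bnd (x : R) : `[a, b]%classic x -> a <= x <= b.
Proof. by rewrite /= in_itv. Qed.

Lemma ELam_affine (c0 c1 : R) :
  Rintegral P setT (fun x => c0 + c1 * x) = c0 + c1 * ELam P.
Proof. exact: (Rintegral_affine measurable_x x_bnd). Qed.

Lemma affine_le_Rintegral {f : R -> R} {lo hi c0 c1 : R} : measurable_fun setT f ->
  (forall x, `[a, b]%classic x -> lo <= f x <= hi) ->
  (forall x, `[a, b]%classic x -> c0 + c1 * x <= f x) ->
  c0 + c1 * ELam P <= Rintegral P setT f.
Proof.
move=> mf f_bnd f_ge; rewrite -ELam_affine.
rewrite !Rintegral_itv //; last by apply: measurable_funD => //; exact: measurable_funM.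
apply: le_Rintegral f_ge; first exact: measurable_itv.
  exact: (integrable_affine measurable_x x_bnd).
exact: integrable_itv mf f_bnd.
Qed.

Lemma Rintegral_le_affine {f : R -> R} {lo hi c0 c1 : R} : measurable_fun setT f ->
  (forall x, `[a, b]%classic x -> lo <= f x <= hi) ->
  (forall x, `[a, b]%classic x -> f x <= c0 + c1 * x) ->
  Rintegral P setT f <= c0 + c1 * ELam P.
Proof.
move=> mf f_bnd f_le; rewrite -ELam_affine.
rewrite !Rintegral_itv //; last by apply: measurable_funD => //; exact: measurable_funM.
apply: le_Rintegral f_le; first exact: measurable_itv.
  exact: integrable_itv mf f_bnd.
exact: (integrable_affine measurable_x x_bnd).
Qed.

Lemma ELam_ge : a <= ELam P.
Proof.
have := @affine_le_Rintegral (fun x => x) a b a 0 measurable_x x_bnd.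
rewrite mul0r addr0; apply=> x /x_bnd /andP[a_le_x _].
by rewrite mul0r addr0.
Qed.

End SupportedIntegrals.

Section JoiningProbability.
Context {R : realType} (P : probability R R) (Rw C s2 mu p : R).

Local Notation q := (qS P Rw C s2 mu p).

(* [q = 0] is the junk value of [xget] when the defining equation has no root. *)
Lemma qS_spec : 0 <= q <= 1 /\ (q = 0 \/ C * EW P s2 mu q <= Rw - p).
Proof.
rewrite /qS; case: ifP => [EW1_le | _]; first by split; [rewrite ler01 lexx | right].
set S := [set r : R | 0 <= r < 1 /\ C * EW P s2 mu r = Rw - p].
have [[r Sr] | noS] := pselect (exists r, S r).
  have [/andP[r_ge0 r_lt1] ->] := xgetPex 0 (ex_intro S r Sr).
  by split; [rewrite r_ge0 ltW | right].
have -> : xget 0 S = 0 by apply: xgetPN => r Sr; apply: noS; exists r.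
by split; [rewrite lexx ler01 | left].
Qed.

End JoiningProbability.

Section ExpectedSojourn.
Context {R : realType} {P : probability R R} {s2 mu lmin lmax : R}.
Hypotheses (P_supp : P `[lmin, lmax]%classic = 1%E) (mu_gt0 : 0 < mu) (s2_gt0 : 0 < s2)
  (lmin_ge0 : 0 <= lmin) (lmax_lt_mu : lmax < mu).

Let s2_half_gt0 : 0 < s2 / 2. Proof. exact: divr_gt0. Qed.

Let scaled_in_support {q x : R} : 0 <= q <= 1 -> `[lmin, lmax]%classic x ->
  0 <= q * x <= lmax.
Proof.
move=> /andP[q_ge0 q_le1]; rewrite /= in_itv /= => /andP[lmin_x x_lmax].
have x_ge0 : 0 <= x := le_trans lmin_ge0 lmin_x.
by rewrite mulr_ge0 //=; apply: le_trans x_lmax; rewrite ler_piMl.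
Qed.

Let W_scaled_bnd {q : R} : 0 <= q <= 1 -> forall x, `[lmin, lmax]%classic x ->
  1 / mu <= W s2 mu (q * x) <= W s2 mu lmax.
Proof.
move=> q01 x /(scaled_in_support q01) /andP[qx_ge0 qx_le].
have qx_lt_mu : q * x < mu by apply: le_lt_trans lmax_lt_mu.
rewrite ler_W ?in_itv //= qx_le andbT.
apply: le_trans (W_ge_linear _ mu_gt0 (ltW s2_gt0) _); last by rewrite qx_ge0.
by rewrite lerDl mulr_ge0 // ltW.
Qed.

Lemma W_le_EW (q t : R) : 0 <= q <= 1 -> t <= ELam P -> q * t < mu ->
  W s2 mu (q * t) <= EW P s2 mu q.
Proof.
move=> q01 t_le qt_lt_mu; have /andP[q_ge0 _] := q01.
set k := W_slope s2 mu (q * t).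
have k_ge0 : 0 <= k := W_slope_ge0 _ (ltW s2_gt0).
have tangent_le_EW : W s2 mu (q * t) - k * q * t + k * q * ELam P <= EW P s2 mu q.
  rewrite /EW; apply: (affine_le_Rintegral P_supp (measurable_W_scaled s2 mu q) (W_scaled_bnd q01)).
  move=> x x_in; have /andP[_ qx_le] := scaled_in_support q01 x_in.
  have := W_tangent_le _ _ mu_gt0 (ltW s2_gt0) qt_lt_mu (le_lt_trans qx_le lmax_lt_mu).
  by rewrite -/k; lra.
apply: le_trans tangent_le_EW.
rewrite -addrA lerDl addrC -mulrBr.
by apply: mulr_ge0; [exact: mulr_ge0 | rewrite subr_ge0].
Qed.

Lemma EW_ge_linear {q : R} : 0 <= q <= 1 -> 1 / mu + s2 / 2 * q * ELam P <= EW P s2 mu q.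
Proof.
move=> q01; rewrite /EW.
apply: (affine_le_Rintegral P_supp (measurable_W_scaled s2 mu q) (W_scaled_bnd q01)).
move=> x /(scaled_in_support q01) /andP[qx_ge0 qx_le].
rewrite -mulrA; apply: W_ge_linear mu_gt0 (ltW s2_gt0) _.
by rewrite qx_ge0; apply: le_lt_trans lmax_lt_mu.
Qed.

Lemma EW_le_quadratic {q : R} : 0 <= q <= 1 ->
  EW P s2 mu q <= 1 / mu + s2 / 2 * q ^+ 2 * (lmax ^+ 2 / (mu - lmax)) + s2 / 2 * q * ELam P.
Proof.
move=> q01; rewrite /EW.
apply: (Rintegral_le_affine P_supp (measurable_W_scaled s2 mu q) (W_scaled_bnd q01)).
move=> x x_in; have /andP[qx_ge0 qx_le] := scaled_in_support q01 x_in.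
apply: le_trans (W_le_quadratic _ _ mu_gt0 (ltW s2_gt0) _ lmax_lt_mu) _.
  by rewrite qx_ge0.
have /andP[q_ge0 _] := q01.
have /andP[lmin_x x_lmax] : lmin <= x <= lmax by move: x_in; rewrite /= in_itv.
have sq_le : (q * x) ^+ 2 / (mu - lmax) <= q ^+ 2 * (lmax ^+ 2 / (mu - lmax)).
  rewrite mulrA ler_wpM2r ?invr_ge0 ?subr_ge0 ?(ltW lmax_lt_mu) //.
  rewrite exprMn ler_wpM2l ?exprn_ge0 // !expr2.
  by apply: ler_pM => //; apply: le_trans lmin_x.
by have := ler_wpM2l (ltW s2_half_gt0) sq_le; lra.
Qed.

Lemma Rintegral_utility (Rw C q : R) : 0 <= q <= 1 ->
  Rintegral P setT (fun x => Rw - C * W s2 mu (q * x)) = Rw - C * EW P s2 mu q.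
Proof.
move=> q01; have mW := measurable_W_scaled s2 mu q.
rewrite -mulNr -(Rintegral_affine P_supp mW (W_scaled_bnd q01)).
by congr Rintegral; apply/funext => x; rewrite mulNr.
Qed.

Lemma lambda_bar_spec :
  0 <= lambda_bar P s2 mu < mu /\ W s2 mu (lambda_bar P s2 mu) = EW P s2 mu 1.
Proof.
have EW1_ge : 0 <= EW P s2 mu 1 - 1 / mu.
  have ELam_ge0 := le_trans lmin_ge0 (ELam_ge P_supp).
  have : 0 <= s2 / 2 * ELam P by rewrite mulr_ge0 // ltW.
  by have := @EW_ge_linear 1; rewrite ler01 lexx mulr1 => /(_ isT); lra.
have [inv_range inv_W] := W_inverse_spec _ mu_gt0 s2_gt0 EW1_ge.
apply: (@xgetPex _ 0 [set x : R | 0 <= x < mu /\ W s2 mu x = EW P s2 mu 1]).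
exists (W_inverse s2 mu (EW P s2 mu 1 - 1 / mu)); split => //.
by rewrite inv_W addrC subrK.
Qed.

Section RevenueComparison.
Context {lam Rw C : R}.
Hypotheses (lam_gt0 : 0 < lam) (C_gt0 : 0 < C) (lam_lt_lmax : lam < lmax).

Let lam_lt_mu : lam < mu := lt_trans lam_lt_lmax lmax_lt_mu.

Let scaled_lam {q : R} : 0 <= q <= 1 -> 0 <= q * lam <= lam.
Proof. by case/andP=> q_ge0 q_le1; rewrite mulr_ge0 ?ler_piMl // ltW. Qed.

Lemma qS_lam_le_xi (p : R) : C / mu < Rw - p -> lam <= ELam P ->
  qS P Rw C s2 mu p * lam <= xi Rw C s2 mu p.
Proof.
move=> p_lt lam_le; have [/andP[xi_ge0 xi_lt_mu] W_xi] := xi_spec _ _ _ mu_gt0 s2_gt0 C_gt0 p_lt.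
have [q01 [-> | EWq_le]] := qS_spec P Rw C s2 mu p; first by rewrite mul0r.
set q := qS P Rw C s2 mu p in q01 EWq_le *.
have /andP[_ q_lam_le] := scaled_lam q01.
have q_lam_lt_mu : q * lam < mu := le_lt_trans q_lam_le lam_lt_mu.
rewrite -(ler_W mu_gt0 s2_gt0) ?in_itv //= -(ler_pM2l C_gt0) W_xi.
apply: le_trans EWq_le; rewrite ler_pM2l //.
exact: W_le_EW.
Qed.

Lemma qS_eq1 (p : R) : C / mu < Rw - p -> lambda_bar P s2 mu <= xi Rw C s2 mu p ->
  qS P Rw C s2 mu p = 1.
Proof.
move=> p_lt lb_le_xi; have [/andP[xi_ge0 xi_lt_mu] W_xi] := xi_spec _ _ _ mu_gt0 s2_gt0 C_gt0 p_lt.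
have [/andP[lb_ge0 lb_lt_mu] W_lb] := lambda_bar_spec.
rewrite /qS ifT // -W_lb -W_xi ler_pM2l //.
by rewrite ler_W ?in_itv.
Qed.

Lemma RevS_le_RevC (p : R) : 0 <= p ->
  qS P Rw C s2 mu p * lam <= xi Rw C s2 mu p -> RevS P Rw C s2 mu lam p <= RevC Rw C s2 mu lam p.
Proof.
move=> p_ge0 q_lam_le; have [/andP[_ q_le1] _] := qS_spec P Rw C s2 mu p.
rewrite /RevS /RevC /qC ler_wpM2l ?mulr_ge0 ?(ltW lam_gt0) //.
by rewrite le_min q_le1 andbT ler_pdivlMr.
Qed.

Lemma RevC_le_RevS (p : R) : 0 <= p ->
  qS P Rw C s2 mu p = 1 -> RevC Rw C s2 mu lam p <= RevS P Rw C s2 mu lam p.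
Proof.
move=> p_ge0 qS1; rewrite /RevS /RevC /qC qS1 ler_wpM2l ?mulr_ge0 ?(ltW lam_gt0) //.
by rewrite ge_min lexx orbT.
Qed.

Lemma RevS_q_sub_RevC_q (q : R) : 0 <= q <= 1 ->
  RevS_q P Rw C s2 mu lam q - RevC_q Rw C s2 mu lam q =
  q * lam * C * (W s2 mu (q * lam) - EW P s2 mu q).
Proof.
move=> q01; rewrite /RevS_q /RevC_q.
by rewrite Rintegral_utility //; ring.
Qed.

Lemma RevC_q_lt_RevS_q : ELam P < lam -> exists2 q0 : R, 0 < q0 &
  forall q : R, 0 < q -> q < q0 -> q <= 1 -> RevC_q Rw C s2 mu lam q < RevS_q P Rw C s2 mu lam q.
Proof.
move=> ELam_lt; set K := lmax ^+ 2 / (mu - lmax).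
have K_gt0 : 0 < K.
  by apply: divr_gt0; [exact/exprn_gt0/(lt_trans lam_gt0) | rewrite subr_gt0].
exists ((lam - ELam P) / K) => [|q q_gt0 q_lt q_le1].
  by apply: divr_gt0 => //; rewrite subr_gt0.
have q01 : 0 <= q <= 1 by rewrite ltW.
rewrite -subr_gt0 RevS_q_sub_RevC_q //; apply: mulr_gt0; first by rewrite !mulr_gt0.
rewrite subr_gt0.
apply: le_lt_trans (EW_le_quadratic q01) _.
apply: lt_le_trans (W_ge_linear _ mu_gt0 (ltW s2_gt0) _); last first.
  by have /andP[-> /le_lt_trans ->] := scaled_lam q01.
have : s2 / 2 * q * (q * K) < s2 / 2 * q * (lam - ELam P).
  by rewrite ltr_pM2l ?mulr_gt0 // -ltr_pdivlMr.
rewrite -/K; lra.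
Qed.

Lemma RevS_q_lt_RevC_q : lam < ELam P -> exists2 q0 : R, 0 < q0 &
  forall q : R, 0 < q -> q < q0 -> q <= 1 -> RevS_q P Rw C s2 mu lam q < RevC_q Rw C s2 mu lam q.
Proof.
move=> lam_lt; set K := lam ^+ 2 / (mu - lam).
have K_gt0 : 0 < K by apply: divr_gt0; [apply: exprn_gt0 | rewrite subr_gt0].
exists ((ELam P - lam) / K) => [|q q_gt0 q_lt q_le1].
  by apply: divr_gt0 => //; rewrite subr_gt0.
have q01 : 0 <= q <= 1 by rewrite ltW.
rewrite -subr_lt0 RevS_q_sub_RevC_q // pmulr_rlt0 ?mulr_gt0 // subr_lt0.
apply: le_lt_trans (W_le_quadratic _ lam mu_gt0 (ltW s2_gt0) (scaled_lam q01) lam_lt_mu) _.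
apply: lt_le_trans (EW_ge_linear q01).
have -> : (q * lam) ^+ 2 / (mu - lam) = q * (q * K) by rewrite /K; ring.
have : s2 / 2 * q * (q * K) < s2 / 2 * q * (ELam P - lam).
  by rewrite ltr_pM2l ?mulr_gt0 // -ltr_pdivlMr.
lra.
Qed.

End RevenueComparison.

End ExpectedSojourn.

Theorem proposition5 (R : realType) (lam mu s2 Rw C lmin lmax : R)
  (P : probability R R)
  (hlam : 0 < lam) (hmu : 0 < mu) (hs2 : (1 / mu) ^+ 2 <= s2)
  (hC : 0 < C) (hR : C / mu <= Rw)
  (hlmin : 0 <= lmin) (hlmin_lam : lmin < lam) (hlam_lmax : lam < lmax)
  (hlmax : lmax < mu)
  (hsupp : support_min_max P lmin lmax) :
  (forall p : R, 0 <= p -> p < Rw - C / mu ->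
     (lam <= ELam P ->
        RevS P Rw C s2 mu lam p <= RevC Rw C s2 mu lam p) /\
     (ELam P < lam -> lam <= lambda_bar P s2 mu -> lam <= xi Rw C s2 mu p ->
        RevS P Rw C s2 mu lam p <= RevC Rw C s2 mu lam p) /\
     (lambda_bar P s2 mu < lam -> lambda_bar P s2 mu <= xi Rw C s2 mu p ->
        RevC Rw C s2 mu lam p <= RevS P Rw C s2 mu lam p)) /\
  (ELam P < lam -> exists2 q0 : R, 0 < q0 &
     forall q : R, 0 < q -> q < q0 -> q <= 1 ->
       RevC_q Rw C s2 mu lam q < RevS_q P Rw C s2 mu lam q) /\
  (lam < ELam P -> exists2 q0 : R, 0 < q0 &
     forall q : R, 0 < q -> q < q0 -> q <= 1 ->
       RevS_q P Rw C s2 mu lam q < RevC_q Rw C s2 mu lam q).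

Proof.
have s2_gt0 : 0 < s2 by apply: lt_le_trans hs2; rewrite exprn_gt0 ?divr_gt0.
have P_supp : P `[lmin, lmax]%classic = 1%E by case: hsupp.
split=> [p p_ge0 p_lt | ].
  (* (b) needs only lam <= xi p, and (c) only lambda_bar <= xi p. *)
  have p_lt' : C / mu < Rw - p by lra.
  split; [move=> lam_le | split; [move=> _ _ lam_le_xi | move=> _ lb_le_xi]].
  - by apply: RevS_le_RevC => //; apply: (qS_lam_le_xi P_supp).
  - apply: RevS_le_RevC => //; apply: le_trans lam_le_xi.
    by have [/andP[_ q_le1] _] := qS_spec P Rw C s2 mu p; rewrite ler_piMl // ltW.
  - by apply: RevC_le_RevS => //; apply: (qS_eq1 P_supp).
by split; [apply: (RevC_q_lt_RevS_q P_supp) | apply: (RevS_q_lt_RevC_q P_supp)].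
Qed.
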